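(* Let $n,p\ge1$ and $\alpha\in\widehat F_{(n,p)}$, with fine-degree components $\alpha_{\underline{k}}$. If $\lambda_i(\alpha)=0$ for some $i\in\{1,\dots,n\}$, then $\alpha_{\underline{k}}=0$ unless the $i$-th column of $\mathrm{supp}(\underline{k})$ is nonempty. Similarly, if $\rho_j(\alpha)=0$ for some $j\in\{1,\dots,p\}$, then $\alpha_{\underline{k}}=0$ unless the $j$-th line of $\mathrm{supp}(\underline{k})$ is nonempty.
   Context: Work over a field of characteristic $0$. $F_{(m,q)}$ is the Lie algebra generated by $x_{i,j}$, $(i,j)\in\{1,\dots,m\}\times\{1,\dots,q\}$, with defining relations $[x_{i,j},x_{i',j'}]=0$ whenever $i\ne i'$ and $j\ne j'$. It is graded by the fine degree in $\bigoplus_{(i,j)}\mathbb{N}\epsilon_{(i,j)}$ with $\deg x_{i,j}=\epsilon_{(i,j)}$, and by total degree ($\deg x_{i,j}=1$); $\widehat F_{(m,q)}$ is the completion for the total degree. For $\underline{k}=\sum k_{(i,j)}\epsilon_{(i,j)}$, $\mathrm{supp}(\underline{k})=\{(i,j)\mid k_{(i,j)}\ne0\}$; the $i$-th column of a set $S$ is $S\cap(\{i\}\times\{1,\dots,p\})$, the $j$-th line is $S\cap(\{1,\dots,n\}\times\{j\})$. $\lambda_i:\widehat F_{(n,p)}\to\widehat F_{(n-1,p)}$ is the continuous Lie morphism with $x_{i',j'}\mapsto x_{i',j'}$ if $i'<i$, $0$ if $i'=i$, $x_{i'-1,j'}$ if $i'>i$; $\rho_j:\widehat F_{(n,p)}\to\widehat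 F_{(n,p-1)}$ is defined analogously in the second index. *)

From HB Require Import structures.
From mathcomp Require Import all_boot all_order all_algebra.
Set Implicit Arguments. Unset Strict Implicit. Unset Printing Implicit Defensive.
Import Order.TTheory GRing.Theory Num.Theory.
Local Open Scope ring_scope.

Record lieAlgebra (K : fieldType) := LieAlgebra {
  lie_carrier :> lmodType K;
  lie_br : lie_carrier -> lie_carrier -> lie_carrier;
  lie_brDl : forall (a : K) (u v w : lie_carrier),
      lie_br (a *: u + v) w = a *: lie_br u w + lie_br v w;
  lie_brDr : forall (a : K) (u v w : lie_carrier),
      lie_br w (a *: u + v) = a *: lie_br w u + lie_br w v;
  lie_br_alt : forall u : lie_carrier, lie_br u u = 0;
  lie_jacobi : forall u v w : lie_carrier,
      lie_br u (lie_br v w) + lie_br v (lie_br w u) + lie_br w (lie_br u v) = 0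
}.
Arguments lie_br {K} _ _ _.

Definition lie_morph (K : fieldType) (L M : lieAlgebra K) (f : L -> M) : Prop :=
  (forall (a : K) (u v : L), f (a *: u + v) = a *: f u + f v) /\
  (forall u v : L, f (lie_br L u v) = lie_br M (f u) (f v)).

Definition lie_presentation (K : fieldType) (I : Type) (rel : I -> I -> Prop)
    (L : lieAlgebra K) (x : I -> L) : Prop :=
  (forall a b, rel a b -> lie_br L (x a) (x b) = 0) /\
  (forall (M : lieAlgebra K) (y : I -> M),
     (forall a b, rel a b -> lie_br M (y a) (y b) = 0) ->
     (exists f : L -> M, lie_morph f /\ forall a, f (x a) = y a) /\
     (forall g h : L -> M, lie_morph g -> lie_morph h ->
        (forall a, g (x a) = h (x a)) -> forall u, g u = h u)).

(** Relations of F_(m,q): x_{i,j}, x_{i',j'} commute if i <> i' and j <> j'. *)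
Definition Frel (m q : nat) (u v : 'I_m * 'I_q) : Prop :=
  u.1 <> v.1 /\ u.2 <> v.2.

Definition is_F (K : fieldType) (m q : nat) (L : lieAlgebra K)
    (x : 'I_m * 'I_q -> L) : Prop :=
  lie_presentation (@Frel m q) x.

Definition fdeg (I : finType) := {ffun I -> nat}.

Definition fdeg_gen (I : finType) (a : I) : fdeg I := [ffun b => nat_of_bool (b == a)].
Definition fdeg_add (I : finType) (k1 k2 : fdeg I) : fdeg I :=
  [ffun b => (k1 b + k2 b)%N].
Definition fdeg_tot (I : finType) (k : fdeg I) : nat := (\sum_b k b)%N.

Inductive lie_monom (K : fieldType) (I : finType) (L : lieAlgebra K) (x : I -> L)
  : fdeg I -> L -> Prop :=
| lm_gen a : lie_monom x (fdeg_gen a) (x a)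
| lm_br k1 k2 u v : lie_monom x k1 u -> lie_monom x k2 v ->
    lie_monom x (fdeg_add k1 k2) (lie_br L u v).

Inductive in_span (K : fieldType) (V : lmodType K) (P : V -> Prop) : V -> Prop :=
| span0 : in_span P 0
| span_cons (a : K) u v : P u -> in_span P v -> in_span P (a *: u + v).

Definition fcomp (K : fieldType) (I : finType) (L : lieAlgebra K) (x : I -> L)
  (k : fdeg I) : L -> Prop := in_span (lie_monom x k).

(** Elements of total degree >= M (the filtration defining the completion). *)
Definition deg_ge (K : fieldType) (I : finType) (L : lieAlgebra K) (x : I -> L)
  (M : nat) : L -> Prop :=
  in_span (fun u => exists k : fdeg I, (M <= fdeg_tot k)%N /\ lie_monom x k u).

(** An element of the completion, given by its fine-degree components. *)
Definition completion_elt (K : fieldType) (I : finType) (L : lieAlgebra K)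
  (x : I -> L) (alpha : fdeg I -> L) : Prop :=
  forall k, fcomp x k (alpha k).

Definition trunc (K : fieldType) (I : finType) (L : lieAlgebra K)
  (alpha : fdeg I -> L) (N : nat) : L :=
  \sum_(k : {ffun I -> 'I_N} | (\sum_b (k b : nat) < N)%N)
     alpha [ffun b => (k b : nat)].

(** A sequence in L converges to 0 in the completion for the total degree. *)
Definition tends0 (K : fieldType) (I : finType) (L : lieAlgebra K) (x : I -> L)
  (s : nat -> L) : Prop :=
  forall M, exists N0, forall N, (N0 <= N)%N -> deg_ge x M (s N).

Definition lambda_gen (K : fieldType) (n p : nat) (L' : lieAlgebra K)
  (x' : 'I_n.-1 * 'I_p -> L') (i : 'I_n) (u : 'I_n * 'I_p) : L' :=
  match unlift i u.1 with Some a => x' (a, u.2) | None => 0 end.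

Definition rho_gen (K : fieldType) (n p : nat) (L' : lieAlgebra K)
  (x' : 'I_n * 'I_p.-1 -> L') (j : 'I_p) (u : 'I_n * 'I_p) : L' :=
  match unlift j u.2 with Some b => x' (u.1, b) | None => 0 end.

From Pilot Require Import Defs.
From HB Require Import structures.
From mathcomp Require Import all_boot all_order all_algebra.
Import Order.TTheory GRing.Theory Num.Theory.
Local Open Scope ring_scope.

(* Rescaling a single generator x_u by t respects the homogeneous relations of
   the presentation, so it extends to an endomorphism acting by t^(k u) on the
   fine-degree component k; in characteristic 0 a Vandermonde argument turns
   this into: a vanishing sum of homogeneous elements vanishes degree by degree.
   The morphism lambda_i sends the component k to zero when the i-th column of
   supp k is nonempty, and otherwise maps it injectively (the inclusion
   x_{a,b} |-> x_{lift i a, b} is a left inverse there) into the component of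
   L' obtained by deleting that column, different such k giving different
   degrees.  If lambda_i(alpha) = 0, then lambda_i of a long enough truncation
   of alpha has no component of low total degree; its component in the degree
   of k is lambda_i(alpha_k) alone, hence alpha_k = 0.  Lines are symmetric. *)

Set Implicit Arguments. Unset Strict Implicit.

Lemma sum_exprZ_eq0 (K : fieldType) (charK0 : [pchar K] =i pred0) (V : lmodType K)
    (D : nat) (z : 'I_D -> V) :
  (forall t : K, \sum_(d < D) t ^+ d *: z d = 0) -> forall d, z d = 0.
Proof.
move=> vanish d0.
pose Vm := Vandermonde D (\row_(j < D) (j : nat)%:R : 'rV[K]_D).
have Vm_unit : Vm \in unitmx.
  rewrite unitmxE det_Vandermonde unitfE; apply/prodf_neq0 => i _.
  apply/prodf_neq0 => j ij; rewrite !mxE -natrB ?(ltnW ij) //.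
  by rewrite (pcharf0P K).1 // subn_eq0 -ltnNge.
pose W := invmx Vm.
transitivity (\sum_(j < D) W j d0 *: \sum_(d < D) (j%:R : K) ^+ d *: z d); last first.
  by rewrite big1 // => j _; rewrite vanish scaler0.
transitivity (\sum_(d < D) (Vm *m W) d d0 *: z d).
  rewrite mulmxV // (bigD1 d0) //= big1 ?addr0; first by rewrite mxE eqxx scale1r.
  by move=> d /negPf nd; rewrite mxE nd scale0r.
under [RHS]eq_bigr do rewrite scaler_sumr.
rewrite exchange_big /=; apply: eq_bigr => d _; rewrite !mxE scaler_suml.
by apply: eq_bigr => j _; rewrite !mxE scalerA mulrC.
Qed.

Lemma sum_exprZ_eq0_seq (K : fieldType) (charK0 : [pchar K] =i pred0)
    (V : lmodType K) (J : eqType) (r : seq J) (f : J -> nat) (g : J -> V) :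
  (forall t : K, \sum_(e <- r) t ^+ f e *: g e = 0) ->
  forall d, \sum_(e <- r | f e == d) g e = 0.
Proof.
move=> vanish d.
pose D := (maxn d (\max_(e <- r) f e)).+1.
have ltfD e : e \in r -> (f e < D)%N.
  by move=> er; rewrite ltnS leq_max (leq_bigmax_seq _ er) ?orbT.
have ltdD : (d < D)%N by rewrite ltnS leq_maxl.
apply: (sum_exprZ_eq0 charK0 (z := fun j : 'I_D => \sum_(e <- r | f e == j) g e)
          _ (Ordinal ltdD)) => t.
rewrite -[RHS](vanish t).
under eq_bigr do rewrite scaler_sumr.
rewrite (exchange_big_dep predT) //= big_seq [RHS]big_seq.
apply: eq_bigr => e er.
by rewrite (big_pred1 (Ordinal (ltfD e er))) // => j; rewrite -val_eqE eq_sym.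
Qed.

Lemma addr_self_eq0 (V : zmodType) (a : V) : a = a + a -> a = 0.
Proof. by move=> h; apply: (@addrI _ a); rewrite addr0 -h. Qed.

Section LieAlgebraFacts.

Variables (K : fieldType) (L M : lieAlgebra K).

Lemma lie_br0l (w : L) : lie_br L 0 w = 0.
Proof. by apply: addr_self_eq0; have := lie_brDl 1 0 0 w; rewrite !scale1r addr0. Qed.

Lemma lie_br0r (w : L) : lie_br L w 0 = 0.
Proof. by apply: addr_self_eq0; have := lie_brDr 1 0 0 w; rewrite !scale1r addr0. Qed.

Lemma lie_brZl a (u w : L) : lie_br L (a *: u) w = a *: lie_br L u w.
Proof. by have := lie_brDl a u 0 w; rewrite addr0 lie_br0l addr0. Qed.

Lemma lie_brZr a (u w : L) : lie_br L w (a *: u) = a *: lie_br L w u.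
Proof. by have := lie_brDr a u 0 w; rewrite addr0 lie_br0r addr0. Qed.

Variables (f : L -> M) (f_morph : lie_morph f).

Lemma lie_morph0 : f 0 = 0.
Proof. by apply: addr_self_eq0; have := f_morph.1 1 0 0; rewrite !scale1r addr0. Qed.

Lemma lie_morphD u v : f (u + v) = f u + f v.
Proof. by have := f_morph.1 1 u v; rewrite !scale1r. Qed.

Lemma lie_morph_sum (J : Type) (r : seq J) (P : pred J) (F : J -> L) :
  f (\sum_(j <- r | P j) F j) = \sum_(j <- r | P j) f (F j).
Proof. exact: (big_morph f lie_morphD lie_morph0). Qed.

End LieAlgebraFacts.

Lemma fcomp_torus_action (K : fieldType) (I : finType) (rel : I -> I -> Prop)
    (L : lieAlgebra K) (x : I -> L) (hL : lie_presentation rel x) (u0 : I) (t : K) :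
  exists th : L -> L, lie_morph th /\
    forall k v, fcomp x k v -> th v = t ^+ (k u0) *: v.
Proof.
pose y a := (if u0 == a then t else 1) *: x a.
have y_rel a b : rel a b -> lie_br L (y a) (y b) = 0.
  by move=> ab; rewrite lie_brZl lie_brZr hL.1 // !scaler0.
have [[th [th_morph th_gen]] _] := hL.2 L y y_rel.
have th_monom k v : lie_monom x k v -> th v = t ^+ (k u0) *: v.
  elim=> [a|k1 k2 u w _ IHu _ IHw].
    by rewrite th_gen /y ffunE; case: (u0 == a).
  by rewrite th_morph.2 IHu IHw lie_brZl lie_brZr scalerA ffunE exprD mulrC.
exists th; split=> // k v; elim=> [|a u w mu _ IH].
  by rewrite (lie_morph0 th_morph) scaler0.
by rewrite th_morph.1 IH (th_monom _ _ mu) scalerDr !scalerA mulrC.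
Qed.

Lemma fcomp_parts_eq0 (K : fieldType) (charK0 : [pchar K] =i pred0) (I : finType)
    (rel : I -> I -> Prop) (L : lieAlgebra K) (x : I -> L)
    (hL : lie_presentation rel x) (s : seq (fdeg I * L)) :
  (forall e, e \in s -> fcomp x e.1 e.2) -> \sum_(e <- s) e.2 = 0 ->
  forall k, \sum_(e <- s | e.1 == k) e.2 = 0.
Proof.
move=> s_hom s0.
(* Separate the degrees one coordinate u at a time, rescaling x_u. *)
suff agree_on U (k : fdeg I) : \sum_(e <- s | all (fun u => e.1 u == k u) U) e.2 = 0.
  move=> k; apply: etrans (agree_on (enum I) k); apply: eq_bigl => e.
  by apply/eqP/allP => [-> //|h]; apply/ffunP => u; apply/eqP/h; rewrite mem_enum.
elim: U k => [|u U IH] k.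
  by apply: etrans s0; apply: eq_bigl.
pose sU := [seq e : fdeg I * L <- s | all (fun u => e.1 u == k u) U].
have weights_vanish t : \sum_(e <- sU) t ^+ (e.1 u) *: e.2 = 0.
  have [th [th_morph th_hom]] := fcomp_torus_action hL u t.
  transitivity (th (\sum_(e <- s | all (fun u => e.1 u == k u) U) e.2)).
    rewrite (lie_morph_sum th_morph) big_filter big_seq_cond [RHS]big_seq_cond.
    apply: eq_bigr => e /andP[es _].
    by rewrite (th_hom _ _ (s_hom e es)).
  by rewrite IH (lie_morph0 th_morph).
rewrite -[RHS](sum_exprZ_eq0_seq charK0 weights_vanish (k u)) big_filter_cond.
by apply: eq_bigl => e /=; rewrite andbC.
Qed.

Lemma in_span_mem (K : fieldType) (V : lmodType K) (P : V -> Prop) u :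
  P u -> in_span P u.
Proof.
by move=> Pu; rewrite -[u]addr0 -[u]scale1r; exact: (Defs.span_cons 1 Pu (Defs.span0 P)).
Qed.

Lemma in_spanZ (K : fieldType) (V : lmodType K) (P : V -> Prop) c u :
  in_span P u -> in_span P (c *: u).
Proof.
elim=> [|a u1 v1 Pu1 _ IH]; first by rewrite scaler0; apply: Defs.span0.
by rewrite scalerDr scalerA; apply: Defs.span_cons.
Qed.

Lemma deg_ge_fcomp_seq (K : fieldType) (I : finType) (L : lieAlgebra K) (x : I -> L)
    M v :
  deg_ge x M v -> exists s : seq (fdeg I * L),
    (forall e, e \in s -> (M <= fdeg_tot e.1)%N /\ fcomp x e.1 e.2) /\
    v = \sum_(e <- s) e.2.
Proof.
elim=> [|a u w [k [Mk mu]] _ [s [s_hom ->]]]; first by exists [::]; rewrite big_nil.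
exists ((k, a *: u) :: s); rewrite big_cons; split=> // e.
rewrite in_cons => /orP[/eqP -> /=|]; last exact: s_hom.
by split=> //; apply/in_spanZ/in_span_mem.
Qed.

Lemma deg_ge_low_part_eq0 (K : fieldType) (charK0 : [pchar K] =i pred0)
    (I : finType) (rel : I -> I -> Prop) (L : lieAlgebra K) (x : I -> L)
    (hL : lie_presentation rel x) (J : eqType) (r : seq J) (deg : J -> fdeg I)
    (v : J -> L) (M : nat) (k : fdeg I) :
  (forall j, fcomp x (deg j) (v j)) -> deg_ge x M (\sum_(j <- r) v j) ->
  (fdeg_tot k < M)%N -> \sum_(j <- r | deg j == k) v j = 0.
Proof.
move=> v_hom /deg_ge_fcomp_seq [s [s_high s_sum]] ltkM.
pose S := [seq (deg j, v j) | j <- r] ++ [seq (e.1, - e.2) | e <- s].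
have S_hom e : e \in S -> fcomp x e.1 e.2.
  rewrite mem_cat => /orP[/mapP[j _ ->] | /mapP[e' /s_high[_ h] ->]] /=.
    exact: v_hom.
  by rewrite -scaleN1r; apply: in_spanZ.
have S0 : \sum_(e <- S) e.2 = 0 by rewrite big_cat !big_map /= sumrN -s_sum subrr.
rewrite -[RHS](fcomp_parts_eq0 charK0 hL S_hom S0 k) big_cat !big_map /=.
rewrite [X in _ = _ + X]big1_seq ?addr0 // => e /andP[/eqP ek /s_high[Me _]].
by move: ltkM; rewrite -ek ltnNge Me.
Qed.

Definition fdeg_restrict (I I' : finType) (iota : I' -> I) (k : fdeg I) : fdeg I' :=
  [ffun a => k (iota a)].

Definition supp_in_dom (I I' : finType) (sig : I -> option I') (k : fdeg I) : Prop :=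
  forall u, sig u = None -> k u = 0%N.

Lemma supp_in_domVkilled (I I' : finType) (sig : I -> option I') (k : fdeg I) :
  (exists2 u, sig u = None & (0 < k u)%N) \/ supp_in_dom sig k.
Proof.
have [u /andP[/eqP killed ku] | dom] :=
  pickP (fun u => (sig u == None) && (0 < k u)%N).
  by left; exists u.
by right=> u killed; have := dom u; rewrite killed eqxx lt0n => /negbFE/eqP.
Qed.

Section Restriction.

Variables (K : fieldType) (I I' : finType) (L L' : lieAlgebra K).
Variables (x : I -> L) (x' : I' -> L') (sig : I -> option I') (iota : I' -> I).
Hypotheses (iotaK : pcancel iota sig) (sigK : ocancel sig iota).
Variable lam : L -> L'.
Hypothesis lam_morph : lie_morph lam.
Hypothesis lam_gen : forall u, lam (x u) = oapp x' 0 (sig u).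

Lemma lie_monom_killed u (k : fdeg I) v :
  sig u = None -> (0 < k u)%N -> lie_monom x k v -> lam v = 0.
Proof.
move=> killed + mon; elim: mon => [a|k1 k2 u1 v1 _ IH1 _ IH2].
  by rewrite ffunE lt0b => /eqP <-; rewrite lam_gen killed.
rewrite ffunE addn_gt0 lam_morph.2 => /orP[/IH1 -> | /IH2 ->].
  exact: lie_br0l.
exact: lie_br0r.
Qed.

Lemma fcomp_killed u (k : fdeg I) v :
  sig u = None -> (0 < k u)%N -> fcomp x k v -> lam v = 0.
Proof.
move=> killed ku; elim=> [|a w1 w2 mu _ IH]; first exact: lie_morph0.
by rewrite lam_morph.1 IH (lie_monom_killed killed ku mu) scaler0 add0r.
Qed.

Lemma supp_in_dom_add (k1 k2 : fdeg I) :
  supp_in_dom sig (fdeg_add k1 k2) -> supp_in_dom sig k1 /\ supp_in_dom sig k2.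
Proof.
by move=> dom12; split=> u /dom12 /eqP; rewrite ffunE addn_eq0 => /andP[/eqP ? /eqP ?].
Qed.

Lemma lie_monom_restrict k v : lie_monom x k v -> supp_in_dom sig k ->
  lie_monom x' (fdeg_restrict iota k) (lam v).
Proof.
have iota_inj : injective iota := pcan_inj iotaK.
elim=> [a|k1 k2 u1 v1 _ IH1 _ IH2].
  case sig_a: (sig a) => [a'|] dom; last by have := dom a sig_a; rewrite ffunE eqxx.
  have -> : fdeg_restrict iota (fdeg_gen a) = fdeg_gen a'.
    by apply/ffunP => b; rewrite !ffunE -(sigK a) sig_a /= inj_eq.
  by rewrite lam_gen sig_a; apply: lm_gen.
move=> /supp_in_dom_add[dom1 dom2].
have -> : fdeg_restrict iota (fdeg_add k1 k2) =
          fdeg_add (fdeg_restrict iota k1) (fdeg_restrict iota k2).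
  by apply/ffunP => b; rewrite !ffunE.
by rewrite lam_morph.2; apply: lm_br; [apply: IH1 | apply: IH2].
Qed.

Lemma fcomp_restrict k v : fcomp x k v -> fcomp x' (fdeg_restrict iota k) (lam v).
Proof.
have [[u killed ku] hv | dom] := supp_in_domVkilled sig k.
  by rewrite (fcomp_killed killed ku hv); apply: Defs.span0.
elim=> [|a u w mu _ IH]; first by rewrite (lie_morph0 lam_morph); apply: Defs.span0.
by rewrite lam_morph.1; apply: Defs.span_cons IH; apply: lie_monom_restrict.
Qed.

Lemma fdeg_restrict_inj k1 k2 : supp_in_dom sig k1 -> supp_in_dom sig k2 ->
  fdeg_restrict iota k1 = fdeg_restrict iota k2 -> k1 = k2.
Proof.
move=> dom1 dom2 /ffunP eq12; apply/ffunP => u.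
case sig_u: (sig u) => [a|]; last by rewrite dom1 ?dom2.
by have := eq12 a; rewrite !ffunE -(sigK u) sig_u.
Qed.

Variables (rel : I -> I -> Prop) (rel' : I' -> I' -> Prop).
Hypotheses (hL : lie_presentation rel x) (hL' : lie_presentation rel' x').
Hypothesis rel_iota : forall a b, rel' a b -> rel (iota a) (iota b).

Lemma fcomp_restrict_inj k v :
  supp_in_dom sig k -> fcomp x k v -> lam v = 0 -> v = 0.
Proof.
have x_iota_rel a b : rel' a b -> lie_br L (x (iota a)) (x (iota b)) = 0.
  by move=> ab; apply: hL.1; apply: rel_iota.
have [[sec [sec_morph sec_gen]] _] := hL'.2 L (fun a => x (iota a)) x_iota_rel.
have sec_lam_monom k1 v1 : lie_monom x k1 v1 -> supp_in_dom sig k1 -> sec (lam v1) = v1.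
  elim=> [a|k2 k3 u w _ IHu _ IHw] dom.
    case sig_a: (sig a) => [a'|]; last by have := dom a sig_a; rewrite ffunE eqxx.
    by rewrite lam_gen sig_a /= sec_gen -(sigK a) sig_a.
  by case/supp_in_dom_add: dom => dom2 dom3; rewrite lam_morph.2 sec_morph.2 IHu ?IHw.
move=> dom hv lam_v0; have <- : sec (lam v) = v.
  elim: hv {lam_v0} => [|a u w mu _ IH]; first by rewrite !lie_morph0.
  by rewrite lam_morph.1 sec_morph.1 IH (sec_lam_monom _ _ mu dom).
by rewrite lam_v0 (lie_morph0 sec_morph).
Qed.

Lemma completion_restrict_eq0 (charK0 : [pchar K] =i pred0)
    (alpha : fdeg I -> L) (halpha : completion_elt x alpha)
    (lam_alpha0 : tends0 x' (fun N => lam (trunc alpha N))) k0 :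
  supp_in_dom sig k0 -> alpha k0 = 0.
Proof.
move=> dom0; apply: (fcomp_restrict_inj dom0 (halpha k0)).
set k0' := fdeg_restrict iota k0.
have [N0 deg_high] := lam_alpha0 (fdeg_tot k0').+1.
pose N := maxn N0 (fdeg_tot k0).+1.
pose conv (kk : {ffun I -> 'I_N}) : fdeg I := [ffun b => (kk b : nat)].
pose r := [seq kk : {ffun I -> 'I_N} <- index_enum {ffun I -> 'I_N}
           | (\sum_b (kk b : nat) < N)%N].
have k0_small b : (k0 b < N)%N.
  by rewrite leq_max ltnS /fdeg_tot (bigD1 b) //= leq_addr orbT.
pose kk0 : {ffun I -> 'I_N} := [ffun b => Ordinal (k0_small b)].
have conv_kk0 : conv kk0 = k0 by apply/ffunP => b; rewrite !ffunE.
have kk0_trunc : (\sum_b (kk0 b : nat) < N)%N.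
  by under eq_bigr => b _ do rewrite ffunE /=; rewrite leq_max ltnS leqnn orbT.
have lam_trunc : lam (trunc alpha N) = \sum_(kk <- r) lam (alpha (conv kk)).
  by rewrite (lie_morph_sum lam_morph) big_filter.
have := deg_ge_low_part_eq0 charK0 hL' (deg := fdeg_restrict iota \o conv)
  (v := fun kk => lam (alpha (conv kk))) (k := k0') (r := r)
  (fun kk => fcomp_restrict (halpha _)) _ (ltnSn _).
rewrite -lam_trunc => /(_ (deg_high N (leq_maxl _ _))).
(* Among the degrees of the truncation, only k0 restricts to k0' without
   being killed by lam. *)
rewrite big_filter_cond (bigD1 kk0) /=; last by rewrite kk0_trunc conv_kk0 eqxx.
rewrite conv_kk0 big1 ?addr0 // => kk /andP[/andP[_ /eqP restr_eq] kk_neq].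
have [[u killed ku] | dom] := supp_in_domVkilled sig (conv kk).
  exact: fcomp_killed killed ku (halpha _).
have /ffunP conv_kk := fdeg_restrict_inj dom dom0 restr_eq.
case/eqP: kk_neq; apply/ffunP => b; apply/val_inj.
by have := conv_kk b; rewrite !ffunE.
Qed.

End Restriction.

Unset Implicit Arguments. Set Strict Implicit.

Theorem lemma1p6 (K : fieldType) (charK0 : [pchar K] =i pred0)
  (n p : nat) (hn : (0 < n)%N) (hp : (0 < p)%N)
  (L : lieAlgebra K) (x : 'I_n * 'I_p -> L) (hL : is_F x)
  (alpha : fdeg ('I_n * 'I_p)%type -> L) (halpha : completion_elt x alpha) :
  (forall (L' : lieAlgebra K) (x' : 'I_n.-1 * 'I_p -> L') (hL' : is_F x')
     (i : 'I_n) (lam : L -> L'),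
     lie_morph lam -> (forall u, lam (x u) = lambda_gen x' i u) ->
     tends0 x' (fun N => lam (trunc alpha N)) ->
     forall k : fdeg ('I_n * 'I_p)%type,
       (forall b : 'I_p, k (i, b) = 0%N) -> alpha k = 0) /\
  (forall (L' : lieAlgebra K) (x' : 'I_n * 'I_p.-1 -> L') (hL' : is_F x')
     (j : 'I_p) (rho : L -> L'),
     lie_morph rho -> (forall u, rho (x u) = rho_gen x' j u) ->
     tends0 x' (fun N => rho (trunc alpha N)) ->
     forall k : fdeg ('I_n * 'I_p)%type,
       (forall a : 'I_n, k (a, j) = 0%N) -> alpha k = 0).
Proof.
split=> L' x' hL' c f f_morph f_gen f_alpha0 k k_c.
  pose sig (u : 'I_n * 'I_p) := omap (fun a => (a, u.2)) (unlift c u.1).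
  pose iota (ab : 'I_n.-1 * 'I_p) := (lift c ab.1, ab.2).
  apply: (@completion_restrict_eq0 _ _ _ _ _ _ _ sig iota _ _ _ f_morph _
            _ _ hL hL' _ charK0 _ halpha f_alpha0).
  - by case=> a b; rewrite /sig /iota /= liftK.
  - by case=> a b; rewrite /sig /=; case: unliftP => // a' ->.
  - by case=> a b; rewrite f_gen /lambda_gen /sig; case: unlift.
  - by case=> [a1 b1] [a2 b2] [/= ne1 ne2]; split=> //= /lift_inj.
  - by case=> a b; rewrite /sig /=; case: unliftP => // -> _; apply: k_c.
pose sig (u : 'I_n * 'I_p) := omap (fun b => (u.1, b)) (unlift c u.2).
pose iota (ab : 'I_n * 'I_p.-1) := (ab.1, lift c ab.2).
apply: (@completion_restrict_eq0 _ _ _ _ _ _ _ sig iota _ _ _ f_morph _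
          _ _ hL hL' _ charK0 _ halpha f_alpha0).
- by case=> a b; rewrite /sig /iota /= liftK.
- by case=> a b; rewrite /sig /=; case: unliftP => // b' ->.
- by case=> a b; rewrite f_gen /rho_gen /sig; case: unlift.
- by case=> [a1 b1] [a2 b2] [/= ne1 ne2]; split=> //= /lift_inj.
- by case=> a b; rewrite /sig /=; case: unliftP => // -> _; apply: k_c.
Qed.
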